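(* The conditional rewriting system $R$ is confluent.
   Context: Terms are built from variables and the constants $C,T,F,K,S$ by binary application (left-associative). $\mathrm{CLC}$ is the conditional system with rules $C\,T\,x\,y\to x$; $C\,F\,x\,y\to y$; $C\,z\,x\,y\to x \Leftarrow x=y$; $K\,x\,y\to x$; $S\,x\,y\,z\to x\,z\,(y\,z)$, where $=$ is convertibility in the system itself, defined by levels ($R_0$: condition empty; $R_{n+1}$: $=$ is conversion of $\to_{R_n}$; $\to_{\mathrm{CLC}}=\bigcup_n\to_{R_n}$); $=_{\mathrm{CLC}}$ is conversion in $\mathrm{CLC}$. $R$ is the conditional rewriting system (closed under contexts) with rules: $C\,T\,x\,y\to x$; $C\,z\,x\,y\to y \Leftarrow z=_{\mathrm{CLC}}F$; $C\,z\,x\,y\to x\Leftarrow z\neq_{\mathrm{CLC}}F \wedge x=_{\mathrm{CLC}}y$; $K\,x\,y\to x$; $S\,x\,y\,z\to x\,z\,(y\,z)$. *)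

From Stdlib Require Import Relations.

Inductive term : Type :=
| Var : nat -> term
| Ct : term
| Tt : term
| Ft : term
| Kt : term
| St : term
| App : term -> term -> term.

(* One-step rewriting of the CLC rules, closed under contexts, where the
   condition of the conditional rule C z x y -> x <= x = y is interpreted
   by the relation E. *)
Inductive clc_step_with (E : term -> term -> Prop) : term -> term -> Prop :=
| clc_CT : forall x y, clc_step_with E (App (App (App Ct Tt) x) y) x
| clc_CF : forall x y, clc_step_with E (App (App (App Ct Ft) x) y) y
| clc_Ceq : forall z x y, E x y -> clc_step_with E (App (App (App Ct z) x) y) x
| clc_K : forall x y, clc_step_with E (App (App Kt x) y) x
| clc_S : forall x y z,
    clc_step_with E (App (App (App St x) y) z) (App (App x z) (App y z))
| clc_appL : forall s s' t, clc_step_with E s s' -> clc_step_with E (App s t) (App s' t)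
| clc_appR : forall s t t', clc_step_with E t t' -> clc_step_with E (App s t) (App s t').

(* Levels: R_0 has empty condition (never satisfied);
   R_{n+1} interprets = as convertibility of ->_{R_n}. *)
Fixpoint clc_level (n : nat) : term -> term -> Prop :=
  match n with
  | O => clc_step_with (fun _ _ => False)
  | S m => clc_step_with (clos_refl_sym_trans term (clc_level m))
  end.

Definition clc_step (s t : term) : Prop := exists n, clc_level n s t.

Definition clc_conv : term -> term -> Prop := clos_refl_sym_trans term clc_step.

Inductive R_step : term -> term -> Prop :=
| R_CT : forall x y, R_step (App (App (App Ct Tt) x) y) x
| R_CF : forall z x y, clc_conv z Ft -> R_step (App (App (App Ct z) x) y) y
| R_Ceq : forall z x y, ~ clc_conv z Ft -> clc_conv x y ->
    R_step (App (App (App Ct z) x) y) x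
| R_K : forall x y, R_step (App (App Kt x) y) x
| R_S : forall x y z, R_step (App (App (App St x) y) z) (App (App x z) (App y z))
| R_appL : forall s s' t, R_step s s' -> R_step (App s t) (App s' t)
| R_appR : forall s t t', R_step t t' -> R_step (App s t) (App s t').

Definition R_red : term -> term -> Prop := clos_refl_trans term R_step.

Definition confluent_rel (r : term -> term -> Prop) : Prop :=
  forall a b c, clos_refl_trans term r a b -> clos_refl_trans term r a c ->
    exists d, clos_refl_trans term r b d /\ clos_refl_trans term r c d.

From Stdlib Require Import Relations.
From Stdlib Require Import Classical Lia List.

(* Confluence of R, following Tait and Martin-Löf's parallel-reduction method.

   The conditions of R refer only to the fixed relation =_CLC, so R behaves
   like an unconditional system in which the C-rules are selected by
   properties of the arguments.  Its only possible overlap is C T x y, which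
   would reduce to both x and y if T =_CLC F held.  We therefore first show
   that CLC is consistent, by interpreting terms in an Engeler-style graph
   model in which every CLC step preserves denotations while T and F denote
   different sets.  Next we introduce parallel reduction Par, which lies
   between R_step and its reflexive-transitive closure, and prove the
   triangle property: every term a has a complete development a' with
   Par b a' whenever Par a b.  The triangle property gives the diamond
   property of Par, and an abstract lemma transfers the diamond property of
   Par to confluence of R. *)

Section DiamondToConfluence.

Variable A : Type.
Variables r p : A -> A -> Prop.

Hypothesis p_diamond :
  forall a b c, p a b -> p a c -> exists d, p b d /\ p c d.

Lemma strip a c :
  clos_refl_trans A p a c -> forall b, p a b ->
  exists d, clos_refl_trans A p b d /\ p c d.
Proof.
  induction 1 as [a c Hac| a| a m c _ IH1 _ IH2]; intros b Hab.
  - destruct (p_diamond a b c Hab Hac) as [d [Hbd Hcd]].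
    exists d; split; [apply rt_step|]; assumption.
  - exists b; split; [apply rt_refl | assumption].
  - destruct (IH1 b Hab) as [d1 [Hbd1 Hmd1]].
    destruct (IH2 d1 Hmd1) as [d2 [Hd1d2 Hcd2]].
    exists d2; split; [eapply rt_trans; eassumption | assumption].
Qed.

Lemma rt_diamond a b c :
  clos_refl_trans A p a b -> clos_refl_trans A p a c ->
  exists d, clos_refl_trans A p b d /\ clos_refl_trans A p c d.
Proof.
  intros Hab; revert c.
  induction Hab as [a b Hab| a| a m b _ IH1 _ IH2]; intros c Hac.
  - destruct (strip a c Hac b Hab) as [d [Hbd Hcd]].
    exists d; split; [assumption | apply rt_step; assumption].
  - exists c; split; [assumption | apply rt_refl].
  - destruct (IH1 c Hac) as [d1 [Hmd1 Hcd1]].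
    destruct (IH2 d1 Hmd1) as [d2 [Hbd2 Hd1d2]].
    exists d2; split; [assumption | eapply rt_trans; eassumption].
Qed.

Lemma rt_mono (q s : A -> A -> Prop) :
  (forall a b, q a b -> s a b) ->
  forall a b, clos_refl_trans A q a b -> clos_refl_trans A s a b.
Proof.
  intros Hqs a b H; induction H.
  - apply rt_step; auto.
  - apply rt_refl.
  - eapply rt_trans; eassumption.
Qed.

Hypothesis r_in_p : forall a b, r a b -> p a b.
Hypothesis p_in_rt_r : forall a b, p a b -> clos_refl_trans A r a b.

Lemma confluent_of_diamond a b c :
  clos_refl_trans A r a b -> clos_refl_trans A r a c ->
  exists d, clos_refl_trans A r b d /\ clos_refl_trans A r c d.
Proof.
  intros Hab Hac.
  assert (p_to_r : forall x y, clos_refl_trans A p x y -> clos_refl_trans A r x y).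
  { intros x y Hxy. apply clos_rt_idempotent.
    exact (rt_mono p (clos_refl_trans A r) p_in_rt_r x y Hxy). }
  destruct (rt_diamond a b c (rt_mono r p r_in_p a b Hab)
                             (rt_mono r p r_in_p a c Hac)) as [d [Hbd Hcd]].
  exists d; split; apply p_to_r; assumption.
Qed.

End DiamondToConfluence.

Inductive token : Type :=
| atom : nat -> token
| arrow : list token -> token -> token.

Definition den := token -> Prop.

Definition within (l : list token) (X : den) : Prop := forall e, In e l -> X e.

Definition apply_den (X Y : den) : den :=
  fun b => exists l, within l Y /\ X (arrow l b).

Definition same_den (X Y : den) : Prop := forall b, X b <-> Y b.

(* K x y = x and S x y z = x z (y z) hold for these denotations. *)
Definition K_den : den := fun b =>
  match b with
  | arrow l (arrow _ c) => In c l
  | _ => False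
  end.

Definition S_den : den := fun b =>
  match b with
  | arrow a (arrow p (arrow q c)) =>
      exists be de, In (arrow de (arrow be c)) a /\
        (forall e, In e de -> In e q) /\
        (forall e, In e be ->
           exists g, (forall u, In u g -> In u q) /\ In (arrow g e) p)
  | _ => False
  end.

(* C z x y denotes (z ∋ T and x) or (z ∋ F and y) or (x and y). *)
Definition C_den : den := fun b =>
  match b with
  | arrow z (arrow x (arrow y c)) =>
      (In (atom 0) z /\ x = c :: nil /\ y = nil) \/
      (In (atom 1) z /\ x = nil /\ y = c :: nil) \/
      (z = nil /\ x = c :: nil /\ y = c :: nil)
  | _ => False
  end.

Fixpoint interp (t : term) : den :=
  match t with
  | Var _ => fun _ => False
  | Ct => C_den
  | Tt => fun b => b = atom 0
  | Ft => fun b => b = atom 1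
  | Kt => K_den
  | St => S_den
  | App s u => apply_den (interp s) (interp u)
  end.

Lemma apply_den_morph X X' Y Y' :
  same_den X X' -> same_den Y Y' -> same_den (apply_den X Y) (apply_den X' Y').
Proof.
  intros HX HY b; split; intros [l [Hl Hb]]; exists l; split;
    solve [intros e He; apply HY; auto | apply HX; auto].
Qed.

Lemma K_den_law X Y : same_den (apply_den (apply_den K_den X) Y) X.
Proof.
  intro b; split.
  - intros [ly [_ [lx [Hx Hin]]]]. apply Hx; exact Hin.
  - intro Hb. exists nil; split; [intros e [] |].
    exists (b :: nil); split; [intros e [<- | []]; exact Hb | left; reflexivity].
Qed.

Lemma C_den_law X Y Z b :
  apply_den (apply_den (apply_den C_den Z) X) Y b <->
  (Z (atom 0) /\ X b) \/ (Z (atom 1) /\ Y b) \/ (X b /\ Y b).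
Proof.
  split.
  - intros [ly [Hy [lx [Hx [lz [Hz H]]]]]]. simpl in H.
    destruct H as [[H0 [-> ->]] | [[H1 [-> ->]] | [-> [-> ->]]]].
    + left; split; [auto | apply Hx; left; reflexivity].
    + right; left; split; [auto | apply Hy; left; reflexivity].
    + right; right; split; [apply Hx | apply Hy]; left; reflexivity.
  - intros [[H0 Hb] | [[H1 Hb] | [HX HY]]].
    + exists nil; split; [intros e [] |].
      exists (b :: nil); split; [intros e [<- | []]; exact Hb |].
      exists (atom 0 :: nil); split; [intros e [<- | []]; exact H0 |].
      left; repeat split; left; reflexivity.
    + exists (b :: nil); split; [intros e [<- | []]; exact Hb |].
      exists nil; split; [intros e [] |].
      exists (atom 1 :: nil); split; [intros e [<- | []]; exact H1 |].
      right; left; repeat split; left; reflexivity.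
    + exists (b :: nil); split; [intros e [<- | []]; exact HY |].
      exists (b :: nil); split; [intros e [<- | []]; exact HX |].
      exists nil; split; [intros e [] |].
      right; right; auto.
Qed.

Lemma collect_witnesses (Y Z : den) be :
  (forall e, In e be -> exists g, within g Z /\ Y (arrow g e)) ->
  exists p q, within p Y /\ within q Z /\
    forall e, In e be ->
      exists g, (forall u, In u g -> In u q) /\ In (arrow g e) p.
Proof.
  induction be as [| e be IH]; intro H.
  - exists nil, nil; repeat split; intros ? [].
  - destruct (H e (or_introl eq_refl)) as [g [Hg HY]].
    destruct IH as [p [q [Hp [Hq Hbe]]]]; [intros e' He'; apply H; right; auto |].
    exists (arrow g e :: p), (g ++ q); repeat split.
    + intros u [<- | Hu]; auto.
    + intros u Hu; apply in_app_or in Hu; destruct Hu; auto.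
    + intros e' [<- | He'].
      * exists g; split; [intros u Hu; apply in_or_app; auto | left; reflexivity].
      * destruct (Hbe e' He') as [g' [Hg' Hin]].
        exists g'; split; [intros u Hu; apply in_or_app; auto | right; auto].
Qed.

Lemma S_den_law X Y Z :
  same_den (apply_den (apply_den (apply_den S_den X) Y) Z)
           (apply_den (apply_den X Z) (apply_den Y Z)).
Proof.
  intro b; split.
  - intros [lz [Hz [ly [Hy [lx [Hx H]]]]]].
    destruct H as [be [de [Hin [Hde Hbe]]]].
    exists be; split.
    + intros e He. destruct (Hbe e He) as [g [Hg Hge]].
      exists g; split; [intros u Hu; apply Hz; auto | apply Hy; auto].
    + exists de; split; [intros u Hu; apply Hz; auto | apply Hx; auto].
  - intros [be [Hbe [de [Hde HX]]]].
    destruct (collect_witnesses Y Z be Hbe) as [p [q [Hp [Hq Hpq]]]].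
    exists (de ++ q); split.
    { intros u Hu; apply in_app_or in Hu; destruct Hu; auto. }
    exists p; split; [exact Hp |].
    exists (arrow de (arrow be b) :: nil); split.
    { intros u [<- | []]; exact HX. }
    exists be, de; split; [left; reflexivity | split].
    + intros e He; apply in_or_app; auto.
    + intros e He. destruct (Hpq e He) as [g [Hg Hin]].
      exists g; split; [intros u Hu; apply in_or_app; auto | exact Hin].
Qed.

Lemma step_sound (E : term -> term -> Prop) :
  (forall x y, E x y -> same_den (interp x) (interp y)) ->
  forall s t, clc_step_with E s t -> same_den (interp s) (interp t).
Proof.
  intros HE s t H; induction H; simpl.
  - intro b. rewrite C_den_law. simpl. intuition discriminate.
  - intro b. rewrite C_den_law. simpl. intuition discriminate.
  - intro b. rewrite C_den_law. specialize (HE _ _ H b). intuition.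
  - apply K_den_law.
  - apply S_den_law.
  - apply apply_den_morph; [assumption | intro; tauto].
  - apply apply_den_morph; [intro; tauto | assumption].
Qed.

Lemma rst_sound (r : term -> term -> Prop) :
  (forall x y, r x y -> same_den (interp x) (interp y)) ->
  forall x y, clos_refl_sym_trans term r x y -> same_den (interp x) (interp y).
Proof.
  intros Hr x y H; induction H as [x y Hxy| x| x y _ IH| x y z _ IH1 _ IH2];
    intro b.
  - apply Hr; assumption.
  - tauto.
  - specialize (IH b); tauto.
  - specialize (IH1 b); specialize (IH2 b); tauto.
Qed.

Lemma level_sound n :
  forall s t, clc_level n s t -> same_den (interp s) (interp t).
Proof.
  induction n as [| n IH]; simpl; apply step_sound.
  - intros _ _ [].
  - apply rst_sound; exact IH.
Qed.

Lemma clc_conv_sound s t : clc_conv s t -> same_den (interp s) (interp t).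
Proof.
  apply rst_sound. intros x y [n Hn]. exact (level_sound n x y Hn).
Qed.

Lemma clc_consistent : ~ clc_conv Tt Ft.
Proof.
  intro H. destruct (clc_conv_sound Tt Ft H (atom 0)) as [HTF _].
  discriminate (HTF eq_refl).
Qed.

Lemma conv_congr (f : term -> term) :
  (forall s s', clc_step s s' -> clc_step (f s) (f s')) ->
  forall s s', clc_conv s s' -> clc_conv (f s) (f s').
Proof.
  intros Hf s s' H; induction H.
  - apply rst_step, Hf; assumption.
  - apply rst_refl.
  - apply rst_sym; assumption.
  - eapply rst_trans; eassumption.
Qed.

Lemma conv_appL s s' t : clc_conv s s' -> clc_conv (App s t) (App s' t).
Proof.
  apply (conv_congr (fun s => App s t)).
  intros a a' [n Hn]; exists n; destruct n; simpl in *; apply clc_appL; exact Hn.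
Qed.

Lemma conv_appR s t t' : clc_conv t t' -> clc_conv (App s t) (App s t').
Proof.
  apply (conv_congr (App s)).
  intros a a' [n Hn]; exists n; destruct n; simpl in *; apply clc_appR; exact Hn.
Qed.

Lemma conv_of_level0 s t :
  clc_step_with (fun _ _ => False) s t -> clc_conv s t.
Proof. intro H; apply rst_step; exists 0; exact H. Qed.

Lemma R_step_conv s t : R_step s t -> clc_conv s t.
Proof.
  intro H; induction H.
  - apply conv_of_level0, clc_CT.
  - eapply rst_trans; [apply conv_appL, conv_appL, conv_appR; eassumption |].
    apply conv_of_level0, clc_CF.
  - (* C z x y = C z x x, which is a level-1 step with a trivial condition *)
    eapply rst_trans; [apply conv_appR, rst_sym; eassumption |].
    apply rst_step; exists 1; apply clc_Ceq, rst_refl.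
  - apply conv_of_level0, clc_K.
  - apply conv_of_level0, clc_S.
  - apply conv_appL; assumption.
  - apply conv_appR; assumption.
Qed.

Lemma R_red_app s s' t t' : R_red s s' -> R_red t t' -> R_red (App s t) (App s' t').
Proof.
  intros Hs Ht. apply rt_trans with (App s' t).
  - clear Ht; induction Hs as [a b H| a| a m b _ IH1 _ IH2].
    + apply rt_step, R_appL; exact H.
    + apply rt_refl.
    + eapply rt_trans; eassumption.
  - clear Hs; induction Ht as [a b H| a| a m b _ IH1 _ IH2].
    + apply rt_step, R_appR; exact H.
    + apply rt_refl.
    + eapply rt_trans; eassumption.
Qed.

Inductive Par : term -> term -> Prop :=
| P_refl : forall a, Par a a
| P_app : forall s s' t t', Par s s' -> Par t t' -> Par (App s t) (App s' t')
| P_CT : forall x x' y, Par x x' -> Par (App (App (App Ct Tt) x) y) x'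
| P_CF : forall z x y y', clc_conv z Ft -> Par y y' ->
    Par (App (App (App Ct z) x) y) y'
| P_Ceq : forall z x y x', ~ clc_conv z Ft -> clc_conv x y -> Par x x' ->
    Par (App (App (App Ct z) x) y) x'
| P_K : forall x x' y, Par x x' -> Par (App (App Kt x) y) x'
| P_S : forall x x' y y' z z', Par x x' -> Par y y' -> Par z z' ->
    Par (App (App (App St x) y) z) (App (App x' z') (App y' z')).

Lemma R_step_Par a b : R_step a b -> Par a b.
Proof.
  intro H; induction H.
  - apply P_CT, P_refl.
  - apply P_CF; [assumption | apply P_refl].
  - apply P_Ceq; [assumption | assumption | apply P_refl].
  - apply P_K, P_refl.
  - apply P_S; apply P_refl.
  - apply P_app; [assumption | apply P_refl].
  - apply P_app; [apply P_refl | assumption].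
Qed.

Lemma Par_R_red a b : Par a b -> R_red a b.
Proof.
  intro H; induction H.
  - apply rt_refl.
  - apply R_red_app; assumption.
  - eapply rt_trans; [apply rt_step, R_CT | assumption].
  - eapply rt_trans; [apply rt_step, R_CF; assumption | assumption].
  - eapply rt_trans; [apply rt_step, R_Ceq; assumption | assumption].
  - eapply rt_trans; [apply rt_step, R_K | assumption].
  - eapply rt_trans; [apply rt_step, R_S |].
    repeat apply R_red_app; assumption.
Qed.

(* Parallel reduction preserves CLC-convertibility, hence the side
   conditions of the C-rules are stable under it. *)
Lemma Par_conv a b : Par a b -> clc_conv a b.
Proof.
  intro H; apply Par_R_red in H.
  induction H as [x y Hxy| x| x y z _ IH1 _ IH2].
  - apply R_step_conv; exact Hxy.
  - apply rst_refl.
  - eapply rst_trans; [exact IH1 | exact IH2].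
Qed.

Definition is_app (t : term) : Prop :=
  match t with App _ _ => True | _ => False end.

Definition redex_head (s : term) : Prop :=
  match s with
  | App (App Ct _) _ | App Kt _ | App (App St _) _ => True
  | _ => False
  end.

Lemma Par_atom a b : ~ is_app a -> Par a b -> b = a.
Proof.
  intros Ha H; destruct H; first [reflexivity | exfalso; apply Ha; exact I].
Qed.

Lemma Par_app_inv s t b : ~ redex_head s -> Par (App s t) b ->
  exists s' t', b = App s' t' /\ Par s s' /\ Par t t'.
Proof.
  intros Hs H; inversion H; subst;
    solve [exists s, t; repeat split; apply P_refl
          | eauto
          | exfalso; apply Hs; exact I].
Qed.

Lemma Par_const_inv c u v b : ~ is_app c -> c <> Kt ->
  Par (App (App c u) v) b ->
  exists u' v', b = App (App c u') v' /\ Par u u' /\ Par v v'.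
Proof.
  intros Hc HK H.
  assert (Hhead : ~ redex_head (App c u)) by (destruct c; simpl in *; tauto).
  destruct (Par_app_inv _ _ _ Hhead H) as [cu' [v' [-> [Hcu Hv]]]].
  assert (Hc' : ~ redex_head c) by (destruct c; simpl in *; tauto).
  destruct (Par_app_inv _ _ _ Hc' Hcu) as [c' [u' [-> [Hcc Hu]]]].
  rewrite (Par_atom c c' Hc Hcc). eauto.
Qed.

Lemma Par_K_inv x y b : Par (App (App Kt x) y) b ->
  (exists x' y', b = App (App Kt x') y' /\ Par x x' /\ Par y y') \/ Par x b.
Proof.
  intro H; inversion H; subst;
    [left; exists x, y; repeat split; apply P_refl | left | right; assumption].
  match goal with Hk : Par (App Kt x) ?s |- _ =>
    destruct (Par_app_inv Kt x s ltac:(simpl; tauto) Hk) as [k' [x' [-> [Hk' Hx]]]] end.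
  rewrite (Par_atom Kt k' ltac:(simpl; tauto) Hk'). eauto.
Qed.

Lemma Par_S_inv x y z b : Par (App (App (App St x) y) z) b ->
  exists x' y' z', Par x x' /\ Par y y' /\ Par z z' /\
    (b = App (App (App St x') y') z' \/ b = App (App x' z') (App y' z')).
Proof.
  intro H; inversion H; subst.
  - exists x, y, z; repeat split; try apply P_refl; left; reflexivity.
  - match goal with Hs : Par (App (App St x) y) ?s |- _ =>
      destruct (Par_const_inv St x y s ltac:(simpl; tauto) ltac:(discriminate) Hs)
        as [x' [y' [-> [Hx Hy]]]] end.
    eauto 10.
  - eauto 10.
Qed.

Lemma Par_C_inv z x y b : Par (App (App (App Ct z) x) y) b ->
  (exists z' x' y', b = App (App (App Ct z') x') y' /\
                    Par z z' /\ Par x x' /\ Par y y')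
  \/ (z = Tt /\ Par x b)
  \/ (clc_conv z Ft /\ Par y b)
  \/ (~ clc_conv z Ft /\ clc_conv x y /\ Par x b).
Proof.
  intro H; inversion H; subst.
  - left; exists z, x, y; repeat split; apply P_refl.
  - left.
    match goal with Hs : Par (App (App Ct z) x) ?s |- _ =>
      destruct (Par_const_inv Ct z x s ltac:(simpl; tauto) ltac:(discriminate) Hs)
        as [z' [x' [-> [Hz Hx]]]] end.
    eauto 10.
  - right; left; auto.
  - right; right; left; auto.
  - right; right; right; auto.
Qed.

Definition full_dev (a a' : term) : Prop :=
  Par a a' /\ forall b, Par a b -> Par b a'.

Lemma dev_atom a : ~ is_app a -> full_dev a a.
Proof.
  intro Ha; split; [apply P_refl |].
  intros b Hb; rewrite (Par_atom a b Ha Hb); apply P_refl.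
Qed.

Lemma dev_K x y x1 : full_dev x x1 -> full_dev (App (App Kt x) y) x1.
Proof.
  intros [Hx1 Hx]; split; [apply P_K; exact Hx1 |].
  intros b Hb; destruct (Par_K_inv x y b Hb) as [[x' [y' [-> [Hx' _]]]] | Hxb].
  - apply P_K, Hx; exact Hx'.
  - apply Hx; exact Hxb.
Qed.

Lemma dev_S x y z x1 y1 z1 :
  full_dev x x1 -> full_dev y y1 -> full_dev z z1 ->
  full_dev (App (App (App St x) y) z) (App (App x1 z1) (App y1 z1)).
Proof.
  intros [Hx1 Hx] [Hy1 Hy] [Hz1 Hz]; split; [apply P_S; assumption |].
  intros b Hb.
  destruct (Par_S_inv x y z b Hb) as [x' [y' [z' [Hx' [Hy' [Hz' [-> | ->]]]]]]].
  - apply P_S; auto.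
  - repeat apply P_app; auto.
Qed.

(* When z = F, the redex C z x y develops to the development of y; the
   competing rule C T x y -> x cannot apply because CLC is consistent. *)
Lemma dev_C_false z x y y1 : clc_conv z Ft -> full_dev y y1 ->
  full_dev (App (App (App Ct z) x) y) y1.
Proof.
  intros HzF [Hy1 Hy]; split; [apply P_CF; assumption |].
  intros b Hb.
  destruct (Par_C_inv z x y b Hb)
    as [[z' [x' [y' [-> [Hz' [_ Hy']]]]]] | [[-> _] | [[_ Hyb] | [HnF _]]]].
  - apply P_CF; [| apply Hy; exact Hy'].
    eapply rst_trans; [apply rst_sym, Par_conv; exact Hz' | exact HzF].
  - exfalso; apply clc_consistent; exact HzF.
  - apply Hy; exact Hyb.
  - contradiction.
Qed.

(* When z <> F but C z x y contracts to x, it develops to the development of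
   x; the conditions survive parallel reduction of z, x, y. *)
Lemma dev_C_left z x y x1 : ~ clc_conv z Ft -> z = Tt \/ clc_conv x y ->
  full_dev x x1 -> full_dev (App (App (App Ct z) x) y) x1.
Proof.
  intros HnF Hleft [Hx1 Hx]; split.
  { destruct Hleft as [-> | Hxy]; [apply P_CT | apply P_Ceq]; assumption. }
  intros b Hb.
  destruct (Par_C_inv z x y b Hb)
    as [[z' [x' [y' [-> [Hz' [Hx' Hy']]]]]] | [[_ Hxb] | [[HzF _] | [_ [_ Hxb]]]]].
  - destruct Hleft as [-> | Hxy].
    + rewrite (Par_atom Tt z' ltac:(simpl; tauto) Hz'). apply P_CT, Hx; exact Hx'.
    + apply P_Ceq; [| | apply Hx; exact Hx'].
      * intro Hz'F; apply HnF.
        eapply rst_trans; [apply Par_conv; exact Hz' | exact Hz'F].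
      * eapply rst_trans; [apply rst_sym, Par_conv; exact Hx' |].
        eapply rst_trans; [exact Hxy | apply Par_conv; exact Hy'].
  - apply Hx; exact Hxb.
  - contradiction.
  - apply Hx; exact Hxb.
Qed.

Lemma dev_C_stuck z x y z1 x1 y1 :
  ~ clc_conv z Ft -> ~ (z = Tt \/ clc_conv x y) ->
  full_dev z z1 -> full_dev x x1 -> full_dev y y1 ->
  full_dev (App (App (App Ct z) x) y) (App (App (App Ct z1) x1) y1).
Proof.
  intros HnF Hnleft [Hz1 Hz] [Hx1 Hx] [Hy1 Hy].
  split; [repeat apply P_app; auto; apply P_refl |].
  intros b Hb.
  destruct (Par_C_inv z x y b Hb)
    as [[z' [x' [y' [-> [Hz' [Hx' Hy']]]]]] | [[HT _] | [[HzF _] | [_ [Hxy _]]]]].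
  - repeat apply P_app; auto; apply P_refl.
  - exfalso; apply Hnleft; left; exact HT.
  - contradiction.
  - exfalso; apply Hnleft; right; exact Hxy.
Qed.

Lemma dev_app s t s1 t1 : ~ redex_head s ->
  full_dev s s1 -> full_dev t t1 -> full_dev (App s t) (App s1 t1).
Proof.
  intros Hs [Hs1 Hsd] [Ht1 Htd]; split; [apply P_app; assumption |].
  intros b Hb; destruct (Par_app_inv s t b Hs Hb) as [s' [t' [-> [Hs' Ht']]]].
  apply P_app; auto.
Qed.

Lemma app_head_shape s :
  (exists z x, s = App (App Ct z) x) \/ (exists x, s = App Kt x) \/
  (exists x y, s = App (App St x) y) \/ ~ redex_head s.
Proof.
  destruct s as [| | | | | | s1 x]; try (right; right; right; simpl; tauto).
  destruct s1 as [| | | | | | s2 y]; try (right; right; right; simpl; tauto).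
  - right; left; eauto.
  - destruct s2; try (right; right; right; simpl; tauto).
    + left; eauto.
    + right; right; left; eauto.
Qed.

Fixpoint size (t : term) : nat :=
  match t with App s u => S (size s + size u) | _ => 1 end.

Lemma size_ind (P : term -> Prop) :
  (forall t, (forall u, size u < size t -> P u) -> P t) -> forall t, P t.
Proof.
  intros Hstep t.
  assert (Hbound : forall n u, size u < n -> P u).
  { induction n as [| n IH]; intros u Hu; [lia |].
    apply Hstep; intros v Hv; apply IH; lia. }
  apply (Hbound (S (size t))); lia.
Qed.

Lemma full_dev_exists : forall a, exists a', full_dev a a'.
Proof.
  apply size_ind; intros a IH.
  destruct a as [| | | | | | s t]; try (eexists; apply dev_atom; simpl; tauto).
  destruct (app_head_shape s) as [[z [x ->]] | [[x ->] | [[x [y ->]] | Hs]]].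
  - destruct (IH z ltac:(simpl; lia)) as [z1 Hz].
    destruct (IH x ltac:(simpl; lia)) as [x1 Hx].
    destruct (IH t ltac:(simpl; lia)) as [y1 Hy].
    destruct (classic (clc_conv z Ft)) as [HzF | HnF].
    { exists y1; apply dev_C_false; assumption. }
    destruct (classic (z = Tt \/ clc_conv x t)) as [Hleft | Hnleft].
    + exists x1; apply dev_C_left; assumption.
    + eexists; apply dev_C_stuck; eassumption.
  - destruct (IH x ltac:(simpl; lia)) as [x1 Hx].
    exists x1; apply dev_K; exact Hx.
  - destruct (IH x ltac:(simpl; lia)) as [x1 Hx].
    destruct (IH y ltac:(simpl; lia)) as [y1 Hy].
    destruct (IH t ltac:(simpl; lia)) as [z1 Hz].
    eexists; apply dev_S; eassumption.
  - destruct (IH s ltac:(simpl; lia)) as [s1 Hs1].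
    destruct (IH t ltac:(simpl; lia)) as [t1 Ht1].
    eexists; apply dev_app; eassumption.
Qed.

Lemma Par_diamond a b c : Par a b -> Par a c -> exists d, Par b d /\ Par c d.
Proof.
  intros Hab Hac; destruct (full_dev_exists a) as [d [_ Hd]].
  exists d; split; apply Hd; assumption.
Qed.

Theorem mainTheorem6 : confluent_rel R_step.
Proof.
  intros a b c.
  apply (confluent_of_diamond term R_step Par Par_diamond R_step_Par Par_R_red).
Qed.
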